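(* Let $\mathfrak g$ be of type $G_2$ and $\lambda,\mu\in P^+$ with $\min\{m_2,n_2\}=0$. Then in $\mathcal F_{\lambda,\mu}$: $$(x^-_{(3,1)}\otimes t)^{(s)}(x^-_{(1,0)}\otimes1)^{(r)}v=0\quad\text{for all }r,s\in\mathbb Z_+\text{ with }r+s>m_1+n_1,$$ $$(x^-_{(1,0)}\otimes1)^{(r)}(x^-_{(1,1)}\otimes t)^{(s)}v=0\quad\text{for all }r,s\in\mathbb Z_+\text{ with }r-s>m_1+n_1.$$
   Context: $\mathfrak g$ is the simple Lie algebra of type $G_2$ with Cartan subalgebra $\mathfrak h$, simple roots $\alpha_1$ (short), $\alpha_2$ (long), coroots $h_1,h_2$, positive roots written $(r_1,r_2)$ for $r_1\alpha_1+r_2\alpha_2$ (namely $(1,0),(0,1),(1,1),(2,1),(3,1),(3,2)$), coroots $h_\alpha$, Chevalley basis $\{x^\pm_\alpha,h_i\}$, $\mathfrak n^+=\mathrm{span}\{x^+_\alpha\}$, dominant weights $P^+$; $m_i=\lambda(h_i)$, $n_i=\mu(h_i)$; $x^{(s)}=x^s/s!$. $\mathcal F_{\lambda,\mu}$ is the cyclic $\mathbf U(\mathfrak g\otimes\mathbb C[t])$-module generated by $v\ne0$ with relations $(\mathfrak n^+\otimes\mathbb C[t])v=0$; $(h\otimes t^r)v=\delta_{r,0}(\lambda+\mu)(h)v$ ($h\in\mathfrak h$); and for each positive root $\alpha$: $(x^-_\alpha\otimes1)^{(\lambda+\mu)(h_\alpha)+1}v=0$, $(x^-_\alpha\otimes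 t)^{\min\{\lambda(h_\alpha),\mu(h_\alpha)\}+1}v=0$, $(x^-_\alpha\otimes t^r)v=0$ for $r\ge2$. *)

From HB Require Import structures.
From mathcomp Require Import all_boot all_order all_algebra.
Set Implicit Arguments. Unset Strict Implicit. Unset Printing Implicit Defensive.
Import Order.TTheory GRing.Theory Num.Theory.
Local Open Scope ring_scope.

(** Positive roots r1*alpha1 + r2*alpha2 (alpha1 short, alpha2 long):
  R10 = (1,0), R01 = (0,1), R11 = (1,1), R21 = (2,1), R31 = (3,1), R32 = (3,2). *)
Inductive g2root := R10 | R01 | R11 | R21 | R31 | R32.

Inductive g2b := Xp of g2root | Xm of g2root | H1 | H2.

(** Structure constants of g in this Chevalley basis:
   [a, b] = \sum_(p <- g2br a b) p.1 * p.2.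
   (Computed from the 7-dimensional representation; [x^+_a, x^-_a] = h_a is the
   coroot, [h_i, x^{+-}_a] = +- a(h_i) x^{+-}_a, integral structure constants.) *)
Definition g2br (a b : g2b) : seq (int * g2b) :=
  match a, b with
  | (Xp R10), (Xp R01) => [:: ((1)%Z, (Xp R11))]
  | (Xp R10), (Xp R11) => [:: ((2)%Z, (Xp R21))]
  | (Xp R10), (Xp R21) => [:: ((3)%Z, (Xp R31))]
  | (Xp R10), (Xm R10) => [:: ((1)%Z, H1)]
  | (Xp R10), (Xm R11) => [:: ((-3)%Z, (Xm R01))]
  | (Xp R10), (Xm R21) => [:: ((-2)%Z, (Xm R11))]
  | (Xp R10), (Xm R31) => [:: ((-1)%Z, (Xm R21))]
  | (Xp R10), H1 => [:: ((-2)%Z, (Xp R10))]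
  | (Xp R10), H2 => [:: ((1)%Z, (Xp R10))]
  | (Xp R01), (Xp R10) => [:: ((-1)%Z, (Xp R11))]
  | (Xp R01), (Xp R31) => [:: ((1)%Z, (Xp R32))]
  | (Xp R01), (Xm R01) => [:: ((1)%Z, H2)]
  | (Xp R01), (Xm R11) => [:: ((1)%Z, (Xm R10))]
  | (Xp R01), (Xm R32) => [:: ((-1)%Z, (Xm R31))]
  | (Xp R01), H1 => [:: ((3)%Z, (Xp R01))]
  | (Xp R01), H2 => [:: ((-2)%Z, (Xp R01))]
  | (Xp R11), (Xp R10) => [:: ((-2)%Z, (Xp R21))]
  | (Xp R11), (Xp R21) => [:: ((-3)%Z, (Xp R32))]
  | (Xp R11), (Xm R10) => [:: ((-3)%Z, (Xp R01))]
  | (Xp R11), (Xm R01) => [:: ((1)%Z, (Xp R10))]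
  | (Xp R11), (Xm R11) => [:: ((1)%Z, H1); ((3)%Z, H2)]
  | (Xp R11), (Xm R21) => [:: ((2)%Z, (Xm R10))]
  | (Xp R11), (Xm R32) => [:: ((1)%Z, (Xm R21))]
  | (Xp R11), H1 => [:: ((1)%Z, (Xp R11))]
  | (Xp R11), H2 => [:: ((-1)%Z, (Xp R11))]
  | (Xp R21), (Xp R10) => [:: ((-3)%Z, (Xp R31))]
  | (Xp R21), (Xp R11) => [:: ((3)%Z, (Xp R32))]
  | (Xp R21), (Xm R10) => [:: ((-2)%Z, (Xp R11))]
  | (Xp R21), (Xm R11) => [:: ((2)%Z, (Xp R10))]
  | (Xp R21), (Xm R21) => [:: ((2)%Z, H1); ((3)%Z, H2)]
  | (Xp R21), (Xm R31) => [:: ((1)%Z, (Xm R10))]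
  | (Xp R21), (Xm R32) => [:: ((-1)%Z, (Xm R11))]
  | (Xp R21), H1 => [:: ((-1)%Z, (Xp R21))]
  | (Xp R31), (Xp R01) => [:: ((-1)%Z, (Xp R32))]
  | (Xp R31), (Xm R10) => [:: ((-1)%Z, (Xp R21))]
  | (Xp R31), (Xm R21) => [:: ((1)%Z, (Xp R10))]
  | (Xp R31), (Xm R31) => [:: ((1)%Z, H1); ((1)%Z, H2)]
  | (Xp R31), (Xm R32) => [:: ((1)%Z, (Xm R01))]
  | (Xp R31), H1 => [:: ((-3)%Z, (Xp R31))]
  | (Xp R31), H2 => [:: ((1)%Z, (Xp R31))]
  | (Xp R32), (Xm R01) => [:: ((-1)%Z, (Xp R31))]
  | (Xp R32), (Xm R11) => [:: ((1)%Z, (Xp R21))]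
  | (Xp R32), (Xm R21) => [:: ((-1)%Z, (Xp R11))]
  | (Xp R32), (Xm R31) => [:: ((1)%Z, (Xp R01))]
  | (Xp R32), (Xm R32) => [:: ((1)%Z, H1); ((2)%Z, H2)]
  | (Xp R32), H2 => [:: ((-1)%Z, (Xp R32))]
  | (Xm R10), (Xp R10) => [:: ((-1)%Z, H1)]
  | (Xm R10), (Xp R11) => [:: ((3)%Z, (Xp R01))]
  | (Xm R10), (Xp R21) => [:: ((2)%Z, (Xp R11))]
  | (Xm R10), (Xp R31) => [:: ((1)%Z, (Xp R21))]
  | (Xm R10), (Xm R01) => [:: ((-1)%Z, (Xm R11))]
  | (Xm R10), (Xm R11) => [:: ((-2)%Z, (Xm R21))]
  | (Xm R10), (Xm R21) => [:: ((-3)%Z, (Xm R31))]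
  | (Xm R10), H1 => [:: ((2)%Z, (Xm R10))]
  | (Xm R10), H2 => [:: ((-1)%Z, (Xm R10))]
  | (Xm R01), (Xp R01) => [:: ((-1)%Z, H2)]
  | (Xm R01), (Xp R11) => [:: ((-1)%Z, (Xp R10))]
  | (Xm R01), (Xp R32) => [:: ((1)%Z, (Xp R31))]
  | (Xm R01), (Xm R10) => [:: ((1)%Z, (Xm R11))]
  | (Xm R01), (Xm R31) => [:: ((-1)%Z, (Xm R32))]
  | (Xm R01), H1 => [:: ((-3)%Z, (Xm R01))]
  | (Xm R01), H2 => [:: ((2)%Z, (Xm R01))]
  | (Xm R11), (Xp R10) => [:: ((3)%Z, (Xm R01))]
  | (Xm R11), (Xp R01) => [:: ((-1)%Z, (Xm R10))]
  | (Xm R11), (Xp R11) => [:: ((-1)%Z, H1); ((-3)%Z, H2)]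
  | (Xm R11), (Xp R21) => [:: ((-2)%Z, (Xp R10))]
  | (Xm R11), (Xp R32) => [:: ((-1)%Z, (Xp R21))]
  | (Xm R11), (Xm R10) => [:: ((2)%Z, (Xm R21))]
  | (Xm R11), (Xm R21) => [:: ((3)%Z, (Xm R32))]
  | (Xm R11), H1 => [:: ((-1)%Z, (Xm R11))]
  | (Xm R11), H2 => [:: ((1)%Z, (Xm R11))]
  | (Xm R21), (Xp R10) => [:: ((2)%Z, (Xm R11))]
  | (Xm R21), (Xp R11) => [:: ((-2)%Z, (Xm R10))]
  | (Xm R21), (Xp R21) => [:: ((-2)%Z, H1); ((-3)%Z, H2)]
  | (Xm R21), (Xp R31) => [:: ((-1)%Z, (Xp R10))]
  | (Xm R21), (Xp R32) => [:: ((1)%Z, (Xp R11))]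
  | (Xm R21), (Xm R10) => [:: ((3)%Z, (Xm R31))]
  | (Xm R21), (Xm R11) => [:: ((-3)%Z, (Xm R32))]
  | (Xm R21), H1 => [:: ((1)%Z, (Xm R21))]
  | (Xm R31), (Xp R10) => [:: ((1)%Z, (Xm R21))]
  | (Xm R31), (Xp R21) => [:: ((-1)%Z, (Xm R10))]
  | (Xm R31), (Xp R31) => [:: ((-1)%Z, H1); ((-1)%Z, H2)]
  | (Xm R31), (Xp R32) => [:: ((-1)%Z, (Xp R01))]
  | (Xm R31), (Xm R01) => [:: ((1)%Z, (Xm R32))]
  | (Xm R31), H1 => [:: ((3)%Z, (Xm R31))]
  | (Xm R31), H2 => [:: ((-1)%Z, (Xm R31))]
  | (Xm R32), (Xp R01) => [:: ((1)%Z, (Xm R31))]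
  | (Xm R32), (Xp R11) => [:: ((-1)%Z, (Xm R21))]
  | (Xm R32), (Xp R21) => [:: ((1)%Z, (Xm R11))]
  | (Xm R32), (Xp R31) => [:: ((-1)%Z, (Xm R01))]
  | (Xm R32), (Xp R32) => [:: ((-1)%Z, H1); ((-2)%Z, H2)]
  | (Xm R32), H2 => [:: ((1)%Z, (Xm R32))]
  | H1, (Xp R10) => [:: ((2)%Z, (Xp R10))]
  | H1, (Xp R01) => [:: ((-3)%Z, (Xp R01))]
  | H1, (Xp R11) => [:: ((-1)%Z, (Xp R11))]
  | H1, (Xp R21) => [:: ((1)%Z, (Xp R21))]
  | H1, (Xp R31) => [:: ((3)%Z, (Xp R31))]
  | H1, (Xm R10) => [:: ((-2)%Z, (Xm R10))]
  | H1, (Xm R01) => [:: ((3)%Z, (Xm R01))]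
  | H1, (Xm R11) => [:: ((1)%Z, (Xm R11))]
  | H1, (Xm R21) => [:: ((-1)%Z, (Xm R21))]
  | H1, (Xm R31) => [:: ((-3)%Z, (Xm R31))]
  | H2, (Xp R10) => [:: ((-1)%Z, (Xp R10))]
  | H2, (Xp R01) => [:: ((2)%Z, (Xp R01))]
  | H2, (Xp R11) => [:: ((1)%Z, (Xp R11))]
  | H2, (Xp R31) => [:: ((-1)%Z, (Xp R31))]
  | H2, (Xp R32) => [:: ((1)%Z, (Xp R32))]
  | H2, (Xm R10) => [:: ((1)%Z, (Xm R10))]
  | H2, (Xm R01) => [:: ((-2)%Z, (Xm R01))]
  | H2, (Xm R11) => [:: ((-1)%Z, (Xm R11))]
  | H2, (Xm R31) => [:: ((1)%Z, (Xm R31))]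
  | H2, (Xm R32) => [:: ((-1)%Z, (Xm R32))]
  | _, _ => [::]
  end.

(** Coroots: h_a = (hco a).1 * h_1 + (hco a).2 * h_2. *)
Definition hco (a : g2root) : nat * nat :=
  match a with
  | R10 => (1, 0) | R01 => (0, 1) | R11 => (1, 3)
  | R21 => (2, 3) | R31 => (1, 1) | R32 => (1, 2)
  end%N.

(** lambda(h_a) for the weight lambda with lambda(h_1) = m1, lambda(h_2) = m2. *)
Definition wt (m1 m2 : nat) (a : g2root) : nat :=
  ((hco a).1 * m1 + (hco a).2 * m2)%N.

(** A representation of the current algebra g ⊗ C[t] on V: [act b r] is the
  action of the basis element b ⊗ t^r (these span g ⊗ C[t]); the bracket
  [x ⊗ t^r, y ⊗ t^s] = [x, y] ⊗ t^(r+s) is respected. Equivalently, V is a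
  U(g ⊗ C[t])-module. *)
Record current_rep (C : numClosedFieldType) (V : lmodType C) := CurrentRep {
  act : g2b -> nat -> {linear V -> V};
  act_bracket : forall (a b : g2b) (r s : nat) (w : V),
    act a r (act b s w) - act b s (act a r w)
    = \sum_(p <- g2br a b) (p.1)%:~R *: act p.2 (r + s)%N w
}.

Definition dpow (C : numClosedFieldType) (V : lmodType C) (rho : current_rep V)
    (b : g2b) (r k : nat) (w : V) : V :=
  (k`!%:R)^-1 *: iter k (act rho b r) w.

(** The defining relations of F_{lambda,mu} on the vector v, where
  lambda(h_i) = m_i, mu(h_i) = n_i. *)
Definition F_relations (C : numClosedFieldType) (V : lmodType C)
    (rho : current_rep V) (m1 m2 n1 n2 : nat) (v : V) : Prop :=
  (forall (a : g2root) (r : nat), act rho (Xp a) r v = 0) /\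
      (forall r : nat, act rho H1 r v = (if r == 0%N then (m1 + n1)%:R *: v else 0)) /\
      (forall r : nat, act rho H2 r v = (if r == 0%N then (m2 + n2)%:R *: v else 0)) /\
      (forall a : g2root, dpow rho (Xm a) 0 (wt (m1 + n1) (m2 + n2) a).+1 v = 0) /\
      (forall a : g2root, dpow rho (Xm a) 1 (minn (wt m1 m2 a) (wt n1 n2 a)).+1 v = 0) /\
    (forall (a : g2root) (r : nat), (2 <= r)%N -> act rho (Xm a) r v = 0).

From HB Require Import structures.
From mathcomp Require Import all_boot all_order all_algebra.
From mathcomp Require Import zify ring.
Import Order.TTheory GRing.Theory Num.Theory.
Local Open Scope ring_scope.
Set Implicit Arguments. Unset Strict Implicit. Unset Printing Implicit Defensive.

(* Write F = x^-_(1,0)⊗1, Y = x^-_(0,1)⊗t, Z1 = x^-_(1,1)⊗t, X = x^-_(2,1)⊗t,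
   Z = x^-_(3,1)⊗t, N = m1 + n1 and u_j = F^(j) v, so that u_(N+1) = 0 and,
   because min(m2, n2) = 0, also Y v = 0.  Every vector met below is
   truncated (killed by all b ⊗ t^r with r >= 2), so the degree-one elements
   Y, Z1, X, Z commute on it.  As (ad F)^(i) Y = -Z1, X, -Z for i = 1, 2, 3
   and vanishes for i >= 4, the Leibniz rule for F^(j+3) (Y v) = 0 yields
       Z u_j = Y u_(j+3) - Z1 u_(j+2) + X u_(j+1).
   Induction on the number of Z's gives Y^a Z1^b X^c Z^d u_j = 0 whenever
   N + 2a + b < j + d; moving F through such monomials (F raises j, or
   trades a Z1 for an X, or an X for a Z) gives F^r Z1^b X^c Z^d u_j = 0
   whenever N + b < j + d + r.  The two claims are special cases. *)

Section Iterates.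
Variables (R : pzRingType) (V : lmodType R).

(* Iterates of a linear endomorphism are linear; registering this lets the
   generic [linear*] lemmas rewrite under [iter]. *)
Fact iter_is_linear (f : {linear V -> V}) n : linear (iter n f).
Proof. by elim: n => [|n IH] a x y //=; rewrite IH linearP. Qed.

HB.instance Definition _ (f : {linear V -> V}) n :=
  GRing.isLinear.Build R V V *:%R (iter n f) (iter_is_linear f n).

Lemma iter_commute (T : Type) (P : T -> Prop) (f g : T -> T) n w :
  (forall x, P x -> P (g x)) -> (forall x, P x -> f (g x) = g (f x)) ->
  P w -> f (iter n g w) = iter n g (f w).
Proof.
move=> Pg fg Pw; elim: n => //= n <-; apply: fg.
by elim: n => //= n; apply: Pg.
Qed.

Lemma iter_commute_twisted (P : V -> Prop) (f h : V -> V) (g : {linear V -> V})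
    (k : R) n w :
  (forall x, P x -> P (g x)) ->
  (forall x, P x -> f (g x) = g (f x) + k *: h x) ->
  (forall x, P x -> h (g x) = g (h x)) -> P w ->
  f (iter n g w) = iter n g (f w) + (n%:R * k) *: iter n.-1 g (h w).
Proof.
move=> Pg fg hg Pw; have Pn m : P (iter m g w) by elim: m => //= m; apply: Pg.
elim: n => [|n IH] /=; first by rewrite mul0r scale0r addr0.
rewrite fg // IH linearD linearZ /= (@iter_commute _ P h g n w Pg hg Pw).
case: n {IH} => [|n] /=; first by rewrite mul0r scale0r addr0 mul1r.
by rewrite -addrA -scalerDl (mulrSr _ n.+1) mulrDl mul1r.
Qed.

End Iterates.

Section Truncated.
Variables (C : numClosedFieldType) (V : lmodType C) (rho : current_rep V).

(* A vector is truncated when every b ⊗ t^r with r >= 2 kills it, as the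
   defining relations of F_{lambda,mu} impose on its generator. *)
Definition truncated (w : V) : Prop :=
  forall b r, (2 <= r)%N -> act rho b r w = 0.

(* Truncation is preserved by the action, since the bracket has degree >= r. *)
Lemma truncated_act b r w : truncated w -> truncated (act rho b r w).
Proof.
move=> tw b' r' r'_ge2; have := act_bracket rho b' b r' r w.
rewrite (tw b' r') // linear0 subr0 => ->.
by apply: big1 => p _; rewrite tw ?scaler0 //; lia.
Qed.

Lemma truncated_iter b r n w :
  truncated w -> truncated (iter n (act rho b r) w).
Proof. by move=> tw; elim: n => //= n; apply: truncated_act. Qed.

Lemma act_commute0 b b' r r' w :
  g2br b b' = [::] -> act rho b r (act rho b' r' w) = act rho b' r' (act rho b r w).
Proof. by move=> br; apply/eqP; rewrite -subr_eq0 act_bracket br big_nil. Qed.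

Lemma act_commute b b' r r' w :
  g2br b b' = [::] \/ (2 <= r + r')%N -> truncated w ->
  act rho b r (act rho b' r' w) = act rho b' r' (act rho b r w).
Proof.
move=> [br | deg] tw; first exact: act_commute0.
apply/eqP; rewrite -subr_eq0 act_bracket.
by apply/eqP/big1 => p _; rewrite tw ?scaler0.
Qed.

Lemma iter_act_commute b b' r r' n w :
  g2br b' b = [::] \/ (2 <= r' + r)%N -> truncated w ->
  act rho b' r' (iter n (act rho b r) w) = iter n (act rho b r) (act rho b' r' w).
Proof.
move=> cond; apply: iter_commute => [x|x tx]; first exact: truncated_act.
exact: act_commute.
Qed.

Lemma act_bracket1 b b' b'' c r r' w :
  g2br b b' = [:: (c, b'')] ->
  act rho b r (act rho b' r' w)
  = act rho b' r' (act rho b r w) + c%:~R *: act rho b'' (r + r') w.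
Proof.
move=> br; have := act_bracket rho b b' r r' w; rewrite br big_seq1 => <-.
by rewrite addrC subrK.
Qed.

End Truncated.

Section G2.
Variables (C : numClosedFieldType) (V : lmodType C) (rho : current_rep V) (v : V).

Local Notation F := (act rho (Xm R10) 0).
Local Notation Y := (act rho (Xm R01) 1).
Local Notation Z1 := (act rho (Xm R11) 1).
Local Notation X := (act rho (Xm R21) 1).
Local Notation Z := (act rho (Xm R31) 1).

Lemma F_Y w : F (Y w) = Y (F w) + (-1) *: Z1 w.
Proof. by rewrite (@act_bracket1 _ _ rho _ _ (Xm R11) (-1)). Qed.

Lemma F_Z1 w : F (Z1 w) = Z1 (F w) + (-2) *: X w.
Proof. by rewrite (@act_bracket1 _ _ rho _ _ (Xm R21) (-2)). Qed.

Lemma F_X w : F (X w) = X (F w) + (-3) *: Z w.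
Proof. by rewrite (@act_bracket1 _ _ rho _ _ (Xm R31) (-3)). Qed.

Definition u j := dpow rho (Xm R10) 0 j v.

Lemma u0 : u 0 = v.
Proof. by rewrite /u /dpow /= invr1 scale1r. Qed.

Lemma F_u j : F (u j) = j.+1%:R *: u j.+1.
Proof.
rewrite /u /dpow linearZ /= scalerA factS natrM invfM mulrA mulfV ?mul1r //.
by rewrite pnatr_eq0.
Qed.

(* u3 k = u_(k-3), extended by zero for k < 3: the index shift making the
   four terms of the Leibniz expansion below uniform. *)
Definition u3 k := if (k < 3)%N then 0 else u (k - 3).

Lemma F_u3 k : F (u3 k) = (k%:R - 2) *: u3 k.+1.
Proof.
case: k => [|[|[|k]]]; rewrite /u3 /= ?linear0 ?scaler0 //; first by rewrite subrr scale0r.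
by rewrite !subSS !subn0 F_u; congr (_ *: _); rewrite !mulrS; ring.
Qed.

(* The Leibniz expansion of F^(k) (Y v) through (ad F)^(i) Y = -Z1, X, -Z. *)
Definition FY k := Y (u3 k.+3) - Z1 (u3 k.+2) + X (u3 k.+1) - Z (u3 k).

Lemma FY0 : FY 0 = Y v.
Proof. by rewrite /FY /u3 /= u0 !linear0 !addr0. Qed.

(* The divided-power recursion F F^(k) = (k+1) F^(k+1). *)
Lemma F_FY k : F (FY k) = k.+1%:R *: FY k.+1.
Proof.
rewrite /FY !(linearD F) !(linearN F) F_Y F_Z1 F_X.
rewrite (@act_commute0 _ _ rho (Xm R10) (Xm R31)) // !F_u3.
move: (u3 k.+4) (u3 k.+3) (u3 k.+2) (u3 k.+1) => a4 a3 a2 a1.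
have regroup (p1 q1 p2 q2 p3 q3 p4 : V) :
    p1 + q1 - (p2 + q2) + (p3 + q3) - p4 = p1 + (q1 - p2) + (p3 - q2) + (q3 - p4).
  by rewrite !opprD !addrA; congr (_ + _ + _); rewrite addrAC.
rewrite !(linearZZ Y, linearZZ Z1, linearZZ X, linearZZ Z) regroup.
rewrite !scalerDr !scalerN -!scalerBl -!scaleNr.
by congr (_ + _ + _ + _); congr (_ *: _); rewrite !mulrS; ring.
Qed.

Hypothesis Yv : Y v = 0.

(* Since Y v = 0, all Leibniz expansions vanish, i.e. for every j
   Z u_j = Y u_(j+3) - Z1 u_(j+2) + X u_(j+1). *)
Lemma Z_u j : Z (u j) = Y (u j.+3) - Z1 (u j.+2) + X (u j.+1).
Proof.
have FY_eq0 k : FY k = 0.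
  elim: k => [|k IH]; first by rewrite FY0.
  by have := F_FY k; rewrite IH linear0 => /esym/eqP; rewrite scaler_eq0 pnatr_eq0 => /eqP.
apply/eqP; rewrite eq_sym -subr_eq0.
by have := FY_eq0 j.+3; rewrite /FY /u3 !subSS !subn0 => ->.
Qed.

Hypothesis v_truncated : truncated rho v.

Lemma u_truncated j : truncated rho (u j).
Proof.
by move=> b r r_ge2; rewrite /u /dpow linearZZ (truncated_iter _ _ _ v_truncated) ?scaler0.
Qed.

Lemma deg1_commute b b' n w : truncated rho w ->
  act rho b' 1 (iter n (act rho b 1) w) = iter n (act rho b 1) (act rho b' 1 w).
Proof. by move=> tw; apply: iter_act_commute => //; right. Qed.

Lemma F_iter_Z1 n w : truncated rho w ->
  F (iter n Z1 w) = iter n Z1 (F w) + (n%:R * -2) *: iter n.-1 Z1 (X w).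
Proof.
apply: iter_commute_twisted => [x|x _|x tx]; [exact: truncated_act | exact: F_Z1 |].
by apply: act_commute => //; right.
Qed.

Lemma F_iter_X n w : truncated rho w ->
  F (iter n X w) = iter n X (F w) + (n%:R * -3) *: iter n.-1 X (Z w).
Proof.
apply: iter_commute_twisted => [x|x _|x tx]; [exact: truncated_act | exact: F_X |].
by apply: act_commute => //; right.
Qed.

Lemma F_iter_Z n w : truncated rho w -> F (iter n Z w) = iter n Z (F w).
Proof. by move=> tw; apply: iter_act_commute => //; left. Qed.

Definition mono a b c d w := iter a Y (iter b Z1 (iter c X (iter d Z w))).
Arguments mono : simpl never.

Fact mono_is_linear a b c d : linear (mono a b c d).
Proof. by move=> k x y; rewrite /mono !linearP. Qed.

HB.instance Definition _ a b c d :=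
  GRing.isLinear.Build C V V *:%R (mono a b c d) (mono_is_linear a b c d).

Lemma mono_Y a b c d w : truncated rho w -> mono a b c d (Y w) = mono a.+1 b c d w.
Proof.
by move=> tw; rewrite /mono iterSr -!deg1_commute //; do !apply: truncated_iter.
Qed.

Lemma mono_Z1 a b c d w : truncated rho w -> mono a b c d (Z1 w) = mono a b.+1 c d w.
Proof.
by move=> tw; rewrite /mono iterSr -!deg1_commute //; do !apply: truncated_iter.
Qed.

Lemma mono_X a b c d w : truncated rho w -> mono a b c d (X w) = mono a b c.+1 d w.
Proof.
by move=> tw; rewrite /mono iterSr -!deg1_commute //; do !apply: truncated_iter.
Qed.

Lemma mono_Z a b c d w : mono a b c d (Z w) = mono a b c d.+1 w.
Proof. by rewrite /mono iterSr. Qed.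

Lemma F_mono b c d j :
  F (mono 0 b c d (u j))
  = j.+1%:R *: mono 0 b c d (u j.+1) + (b%:R * -2) *: mono 0 b.-1 c.+1 d (u j)
    + (c%:R * -3) *: mono 0 b c.-1 d.+1 (u j).
Proof.
have tu := u_truncated j.
rewrite /mono /= F_iter_Z1; last by do !apply: truncated_iter.
rewrite F_iter_X; last by do !apply: truncated_iter.
rewrite F_iter_Z // F_u (linearZZ (iter d Z)) (linearZZ (iter c X)).
by rewrite (linearD (iter b Z1)) !(linearZZ (iter b Z1)) addrAC.
Qed.

Variable N : nat.
Hypothesis uN : u N.+1 = 0.

(* Since F u_j = (j+1) u_(j+1), the sequence u vanishes from N+1 on. *)
Lemma u_vanish j : (N < j)%N -> u j = 0.
Proof.
elim: j => [//|j IH] lt_Nj; have [lt_Nj' | ->] : (N < j)%N \/ j = N by lia.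
  by have := F_u j; rewrite IH // linear0 => /esym/eqP; rewrite scaler_eq0 pnatr_eq0 => /eqP.
exact: uN.
Qed.

(* Y^a Z1^b X^c Z^d u_j = 0 when N + 2a + b < j + d: by induction on d, each
   Z is traded for a Y, a Z1 or an X via Z_u. *)
Lemma mono_u_vanish a b c d j : (N + 2 * a + b < j + d)%N -> mono a b c d (u j) = 0.
Proof.
elim: d a b c j => [|d IH] a b c j lt.
  by rewrite /mono /= u_vanish ?linear0 //; lia.
rewrite -mono_Z Z_u linearD linearB /= mono_Y ?mono_Z1 ?mono_X; try exact: u_truncated.
by rewrite !IH ?subrr ?addr0 //; lia.
Qed.

Lemma F_mono_u_vanish r b c d j :
  (N + b < j + d + r)%N -> iter r F (mono 0 b c d (u j)) = 0.
Proof.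
elim: r b c d j => [|r IH] b c d j lt; first by apply: mono_u_vanish; lia.
rewrite iterSr F_mono !(linearD (iter r F)) !(linearZZ (iter r F)) /=.
case: b lt => [|b] lt; first by rewrite mul0r scale0r !IH ?scaler0 ?addr0 //; lia.
by rewrite !IH ?scaler0 ?addr0 //; lia.
Qed.

End G2.

Lemma F_relations_truncated (C : numClosedFieldType) (V : lmodType C)
    (rho : current_rep V) m1 m2 n1 n2 v :
  F_relations rho m1 m2 n1 n2 v -> truncated rho v.
Proof.
move=> [Xp_v [H1_v [H2_v [_ [_ deg2_v]]]]] [a|a||] r r_ge2; first exact: Xp_v.
- exact: deg2_v.
- by rewrite H1_v; case: r r_ge2.
- by rewrite H2_v; case: r r_ge2.
Qed.

Theorem lemma6p1 (C : numClosedFieldType) (m1 m2 n1 n2 : nat) :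
  minn m2 n2 = 0%N ->
  forall (V : lmodType C) (rho : current_rep V) (v : V),
    F_relations rho m1 m2 n1 n2 v ->
    (forall r s : nat, (m1 + n1 < r + s)%N ->
       dpow rho (Xm R31) 1 s (dpow rho (Xm R10) 0 r v) = 0) /\
    (forall r s : nat, (m1 + n1 < r - s)%N ->
       dpow rho (Xm R10) 0 r (dpow rho (Xm R11) 1 s v) = 0).
Proof.
move=> min0 V rho v rels; have tv := F_relations_truncated rels.
have [_ [_ [_ [F0_v [F1_v _]]]]] := rels.
(* Y v = 0 is the relation (x^-_(0,1) ⊗ t)^(min(m2,n2)+1) v = 0, and
   u_(N+1) = 0 the relation (x^-_(1,0) ⊗ 1)^(N+1) v = 0. *)
have Yv : act rho (Xm R01) 1 v = 0.
  by have := F1_v R01; rewrite /wt /= !mul0n !mul1n !add0n min0 /dpow /= invr1 scale1r.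
have uN : u rho v (m1 + n1).+1 = 0.
  by have := F0_v R10; rewrite /wt /= !mul1n !mul0n !addn0.
split=> r s lt.
- rewrite /dpow -/(u rho v r) -[iter s _ _]/(mono rho 0 0 0 s (u rho v r)).
  by rewrite (mono_u_vanish Yv tv uN) ?scaler0 //; lia.
- rewrite /dpow linearZZ /= -[X in iter s _ X](u0 rho v).
  rewrite -[iter s _ _]/(mono rho 0 s 0 0 (u rho v 0)).
  by rewrite (F_mono_u_vanish Yv tv uN) ?scaler0 //; lia.
Qed.
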